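(* Let $\mathcal H$ be a regular hypergraph with underlying graph $E$. Then $L_K(\mathcal H)$, together with the natural homomorphism $K(E)\to L_K(\mathcal H)$, is the universal localization of the path algebra $K(E)$ with respect to the set of homomorphisms of finitely generated projective right $K(E)$-modules $\sigma_h:\bigoplus_{j\in J_h}r(h)_jK(E)\to\bigoplus_{i\in I_h}s(h)_iK(E)$, $(a_j)_{j\in J_h}\mapsto\big(\sum_{j\in J_h}h_{ij}a_j\big)_{i\in I_h}$, for $h\in\mathcal H^1$.
   Context: $K$ is a field. A hypergraph $\mathcal H=(\mathcal H^0,\mathcal H^1,s,r)$: vertex set $\mathcal H^0$, hyperedge set $\mathcal H^1$, and for each $h$ nonempty index sets $I_h,J_h$ with families $s(h)=(s(h)_i)_{i\in I_h}$, $r(h)=(r(h)_j)_{j\in J_h}$ of vertices; regular means all $I_h,J_h$ finite. $L_K(\mathcal H)$ is the $K$-algebra generated by $\{v,h_{ij},h_{ij}^*\}$ subject to $uv=\delta_{u,v}u$; $s(h)_ih_{ij}=h_{ij}=h_{ij}r(h)_j$, $r(h)_jh_{ij}^*=h_{ij}^*=h_{ij}^*s(h)_i$; $\sum_{j\in J_h}h_{ij}h_{kj}^*=\delta_{ik}s(h)_i$; $\sum_{i\in I_h}h_{ij}^*h_{ik}=\delta_{jk}r(h)_j$. The underlying graph $E$ has $E^0=\mathcal H^0$, $E^1=\{h_{ij}\}$, $s(h_{ij})=s(h)_i$, $r(h_{ij})=r(h)_j$; $K(E)$ is its path algebra (free $K$-algebra on $E^0\cup E^1$ modulo $vw=\delta_{vw}v$,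 $s(e)e=e=er(e)$). The universal localization of an algebra $A$ with respect to a set $\Sigma$ of homomorphisms $\sigma:P_\sigma\to Q_\sigma$ between finitely generated projective $A$-modules is an algebra homomorphism $A\to\Sigma^{-1}A$ such that each $\sigma\otimes_A\mathrm{id}_{\Sigma^{-1}A}$ is an isomorphism, and which is initial among all algebra homomorphisms $f:A\to B$ such that each $\sigma\otimes_A\mathrm{id}_B$ is an isomorphism (every such $f$ factors uniquely through $A\to\Sigma^{-1}A$). *)

From HB Require Import structures.
From mathcomp Require Import all_boot all_algebra.
Set Implicit Arguments. Unset Strict Implicit. Unset Printing Implicit Defensive.
Import GRing.Theory.
Local Open Scope ring_scope.

(* Associative, not necessarily unital K-algebras (path algebras of graphs
   with infinitely many vertices are non-unital). *)
Record nalg (K : fieldType) := NAlg {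
  nalg_sort :> lmodType K;
  nmul : nalg_sort -> nalg_sort -> nalg_sort;
  nmulA : associative nmul;
  nmulDl : left_distributive nmul +%R;
  nmulDr : right_distributive nmul +%R;
  nmulZl : forall (a : K) (x y : nalg_sort), nmul (a *: x) y = a *: nmul x y;
  nmulZr : forall (a : K) (x y : nalg_sort), nmul x (a *: y) = a *: nmul x y }.
Arguments nmul {K} n _ _ : rename.

Definition nalg_hom (K : fieldType) (A B : nalg K) (f : A -> B) : Prop :=
  (forall (a : K) (x y : A), f (a *: x + y) = a *: f x + f y) /\
  (forall x y : A, f (nmul A x y) = nmul B (f x) (f y)).

(* Regular hypergraph: I_h = 'I_(hI h), J_h = 'I_(hJ h), finite and nonempty. *)
Record rhypergraph := RHyp {
  hvert : Type;
  hedge : Type;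
  hI : hedge -> nat;
  hJ : hedge -> nat;
  hI_gt0 : forall h, (0 < hI h)%N;
  hJ_gt0 : forall h, (0 < hJ h)%N;
  hs : forall h, 'I_(hI h) -> hvert;
  hr : forall h, 'I_(hJ h) -> hvert }.

Section Rel.
Variables (K : fieldType) (H : rhypergraph).

Definition vert_rel (A : nalg K) (pv : hvert H -> A) : Prop :=
  (forall u, nmul A (pv u) (pv u) = pv u) /\
  (forall u v, u <> v -> nmul A (pv u) (pv v) = 0).

Definition edge_fam (A : nalg K) :=
  forall h : hedge H, 'I_(hI h) -> 'I_(hJ h) -> A.

Definition path_rel (A : nalg K) (pv : hvert H -> A) (pe : edge_fam A) : Prop :=
  vert_rel pv /\
  forall h i j, nmul A (pv (hs i)) (pe h i j) = pe h i j /\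
                nmul A (pe h i j) (pv (hr j)) = pe h i j.

(* A, pv, pe is (a model of) K(E): the algebra presented by the generators and
   relations above (universal property of the free algebra modulo relations). *)
Definition is_path_algebra (A : nalg K) (pv : hvert H -> A) (pe : edge_fam A) :=
  path_rel pv pe /\
  forall (B : nalg K) (qv : hvert H -> B) (qe : edge_fam B),
    path_rel qv qe ->
    (exists g : A -> B, nalg_hom g /\ (forall v, g (pv v) = qv v) /\
                        (forall h i j, g (pe h i j) = qe h i j)) /\
    (forall g g' : A -> B, nalg_hom g -> nalg_hom g' ->
       (forall v, g (pv v) = g' (pv v)) ->
       (forall h i j, g (pe h i j) = g' (pe h i j)) ->
       forall x, g x = g' x).

Definition leavitt_rel (L : nalg K) (lv : hvert H -> L) (le les : edge_fam L) :=
  vert_rel lv /\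
  forall h,
    (forall i j, nmul L (lv (hs i)) (le h i j) = le h i j /\
                 nmul L (le h i j) (lv (hr j)) = le h i j /\
                 nmul L (lv (hr j)) (les h i j) = les h i j /\
                 nmul L (les h i j) (lv (hs i)) = les h i j) /\
    (forall i k : 'I_(hI h),
       \sum_(j < hJ h) nmul L (le h i j) (les h k j)
         = if i == k then lv (hs i) else 0) /\
    (forall j k : 'I_(hJ h),
       \sum_(i < hI h) nmul L (les h i j) (le h i k)
         = if j == k then lv (hr j) else 0).

Definition is_leavitt_algebra (L : nalg K) (lv : hvert H -> L)
    (le les : edge_fam L) :=
  leavitt_rel lv le les /\
  forall (B : nalg K) (qv : hvert H -> B) (qe qes : edge_fam B),
    leavitt_rel qv qe qes ->
    (exists g : L -> B, nalg_hom g /\ (forall v, g (lv v) = qv v) /\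
        (forall h i j, g (le h i j) = qe h i j) /\
        (forall h i j, g (les h i j) = qes h i j)) /\
    (forall g g' : L -> B, nalg_hom g -> nalg_hom g' ->
       (forall v, g (lv v) = g' (lv v)) ->
       (forall h i j, g (le h i j) = g' (le h i j)) ->
       (forall h i j, g (les h i j) = g' (les h i j)) ->
       forall x, g x = g' x).

Definition in_rideal (B : nalg K) (e x : B) : Prop := exists y, x = nmul B e y.

(* sigma_h (x) id_B is an isomorphism, for every h, where g : A -> B.
   Under the canonical identification  r A (x)_A B = g(r) B  (r idempotent),
   sigma_h (x) id_B is the map
     (+)_j g(r(h)_j) B -> (+)_i g(s(h)_i) B,  (b_j) |-> (sum_j g(h_ij) b_j)_i. *)
Definition sigma_inverting (A : nalg K) (pv : hvert H -> A) (pe : edge_fam A)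
    (B : nalg K) (g : A -> B) : Prop :=
  forall h : hedge H,
    (forall b b' : 'I_(hJ h) -> B,
       (forall j, in_rideal (g (pv (hr j))) (b j)) ->
       (forall j, in_rideal (g (pv (hr j))) (b' j)) ->
       (forall i, \sum_(j < hJ h) nmul B (g (pe h i j)) (b j)
                = \sum_(j < hJ h) nmul B (g (pe h i j)) (b' j)) ->
       forall j, b j = b' j) /\
    (forall c : 'I_(hI h) -> B,
       (forall i, in_rideal (g (pv (hs i))) (c i)) ->
       exists b : 'I_(hJ h) -> B,
         (forall j, in_rideal (g (pv (hr j))) (b j)) /\
         (forall i, \sum_(j < hJ h) nmul B (g (pe h i j)) (b j) = c i)).

Definition is_univ_loc (A : nalg K) (pv : hvert H -> A) (pe : edge_fam A)
    (L : nalg K) (f : A -> L) : Prop :=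
  nalg_hom f /\ sigma_inverting pv pe f /\
  forall (B : nalg K) (g : A -> B), nalg_hom g -> sigma_inverting pv pe g ->
    (exists k : L -> B, nalg_hom k /\ forall x, k (f x) = g x) /\
    (forall k k' : L -> B, nalg_hom k -> nalg_hom k' ->
       (forall x, k (f x) = g x) -> (forall x, k' (f x) = g x) ->
       forall y, k y = k' y).

End Rel.

(* A homomorphism g : K(E) -> B inverts every sigma_h exactly when the images
   of the vertices and edges extend to a Leavitt family in B.  Given the
   Leavitt relations, c |-> (sum_i h_ij^* c_i)_j is a two-sided inverse of
   sigma_h (x) B.  Conversely, if sigma_h (x) B is bijective, the ghost edges
   h_kj^* (j in J_h) are forced to be its inverse applied to the k-th unit
   column (delta_ik g(s(h)_i))_i, and injectivity of sigma_h (x) B yields the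
   remaining Leavitt relations.  The extension being unique, the universal
   properties of K(E) and of L_K(H) combine into that of the localization. *)
From mathcomp Require Import all_boot all_algebra.
From Stdlib Require Import ClassicalEpsilon FunctionalExtensionality.
Set Implicit Arguments. Unset Strict Implicit. Unset Printing Implicit Defensive.
Import GRing.Theory.
Local Open Scope ring_scope.

Section NalgTheory.
Variables (K : fieldType) (A : nalg K).

Lemma nmul0l (x : A) : nmul A 0 x = 0.
Proof. by apply: (addrI (nmul A 0 x)); rewrite -nmulDl !addr0. Qed.

Lemma nmul0r (x : A) : nmul A x 0 = 0.
Proof. by apply: (addrI (nmul A x 0)); rewrite -nmulDr !addr0. Qed.

Lemma nmul_suml n (F : 'I_n -> A) x :
  nmul A (\sum_(i < n) F i) x = \sum_(i < n) nmul A (F i) x.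
Proof.
by apply: (big_morph (nmul A ^~ x)); [move=> a b; exact: nmulDl | exact: nmul0l].
Qed.

Lemma nmul_sumr n (F : 'I_n -> A) x :
  nmul A x (\sum_(i < n) F i) = \sum_(i < n) nmul A x (F i).
Proof.
by apply: (big_morph (nmul A x)); [move=> a b; exact: nmulDr | exact: nmul0r].
Qed.

Lemma big_nmulA n m (X : 'I_n -> A) (Y : 'I_n -> 'I_m -> A) (Z : 'I_m -> A) :
  \sum_(i < n) nmul A (X i) (\sum_(k < m) nmul A (Y i k) (Z k)) =
  \sum_(k < m) nmul A (\sum_(i < n) nmul A (X i) (Y i k)) (Z k).
Proof.
under eq_bigr => i _ do rewrite nmul_sumr.
under [RHS]eq_bigr => k _ do rewrite nmul_suml.
rewrite exchange_big /=; apply: eq_bigr => k _; apply: eq_bigr => i _.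
exact: nmulA.
Qed.

Lemma big_nmul_deltal n (i : 'I_n) (v : A) (Z : 'I_n -> A) :
  \sum_(k < n) nmul A (if i == k then v else 0) (Z k) = nmul A v (Z i).
Proof.
rewrite (bigD1 i) //= eqxx big1 ?addr0 // => k nki.
by rewrite eq_sym (negbTE nki) nmul0l.
Qed.

Lemma big_nmul_deltar n (k : 'I_n) (V X : 'I_n -> A) :
  \sum_(j < n) nmul A (X j) (if j == k then V j else 0) = nmul A (X k) (V k).
Proof.
rewrite (bigD1 k) //= eqxx big1 ?addr0 // => j njk.
by rewrite (negbTE njk) nmul0r.
Qed.

Lemma in_ridealP (e x : A) :
  nmul A e e = e -> in_rideal e x <-> nmul A e x = x.
Proof. by move=> ee; split=> [[y ->]|<-]; [rewrite nmulA ee | exists x]. Qed.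

Lemma in_rideal_delta (b : bool) (e : A) :
  nmul A e e = e -> in_rideal e (if b then e else 0).
Proof. by move=> ee; case: b; [exists e | exists 0; rewrite nmul0r]. Qed.

Variables (B : nalg K) (g : A -> B).
Hypothesis hg : nalg_hom g.

Lemma nalg_homD x y : g (x + y) = g x + g y.
Proof. by have := hg.1 1 x y; rewrite !scale1r. Qed.

Lemma nalg_hom0 : g 0 = 0.
Proof. by have := hg.1 (-1) 0 0; rewrite scaler0 addr0 scaleN1r addNr. Qed.

Lemma nalg_hom_sum n (F : 'I_n -> A) :
  g (\sum_(i < n) F i) = \sum_(i < n) g (F i).
Proof. exact: (big_morph g nalg_homD nalg_hom0). Qed.

Lemma nalg_hom_delta (b : bool) x : g (if b then x else 0) = if b then g x else 0.
Proof. by case: b; rewrite ?nalg_hom0. Qed.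

End NalgTheory.

Lemma nalg_hom_comp (K : fieldType) (A B C : nalg K) (f : A -> B) (g : B -> C) :
  nalg_hom f -> nalg_hom g -> nalg_hom (fun x => g (f x)).
Proof. by move=> hf hg; split=> [a x y|x y]; rewrite ?hf.1 ?hg.1 ?hf.2 ?hg.2. Qed.

Section LeavittFamilies.
Variables (K : fieldType) (H : rhypergraph) (B : nalg K).
Variables (qv : hvert H -> B) (qe : edge_fam H B).
Arguments qe : clear implicits.

(* [sigma_inverting pv pe g] is convertible to
   [sigma_bijective (fun v => g (pv v)) (fun h i j => g (pe h i j))]. *)
Definition sigma_bijective : Prop :=
  forall h : hedge H,
    (forall b b' : 'I_(hJ h) -> B,
       (forall j, in_rideal (qv (hr j)) (b j)) ->
       (forall j, in_rideal (qv (hr j)) (b' j)) ->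
       (forall i, \sum_(j < hJ h) nmul B (qe h i j) (b j)
                = \sum_(j < hJ h) nmul B (qe h i j) (b' j)) ->
       forall j, b j = b' j) /\
    (forall c : 'I_(hI h) -> B,
       (forall i, in_rideal (qv (hs i)) (c i)) ->
       exists b : 'I_(hJ h) -> B,
         (forall j, in_rideal (qv (hr j)) (b j)) /\
         (forall i, \sum_(j < hJ h) nmul B (qe h i j) (b j) = c i)).

Lemma leavitt_rel_sigma_bijective (qes : edge_fam H B) :
  leavitt_rel qv qe qes -> sigma_bijective.
Proof.
case=> [[idem _] rel] h; have [edge [ghost_edge edge_ghost]] := rel h.
have sigma_retraction (b : 'I_(hJ h) -> B) j : in_rideal (qv (hr j)) (b j) ->
    \sum_(i < hI h) nmul B (qes h i j) (\sum_(k < hJ h) nmul B (qe h i k) (b k))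
    = b j.
  rewrite big_nmulA; under eq_bigr => k _ do rewrite edge_ghost.
  by rewrite big_nmul_deltal => /in_ridealP ->.
split=> [b b' rb rb' eq_sigma j | c rc].
  rewrite -(sigma_retraction b) // -(sigma_retraction b') //.
  by under eq_bigr do rewrite eq_sigma.
exists (fun j => \sum_(i < hI h) nmul B (qes h i j) (c i)); split=> [j|i].
  apply/in_ridealP; first exact: idem.
  by rewrite nmul_sumr; apply: eq_bigr => i _; rewrite nmulA (edge i j).2.2.1.
rewrite big_nmulA; under eq_bigr => k _ do rewrite ghost_edge.
by rewrite big_nmul_deltal; apply/in_ridealP.
Qed.

Lemma leavitt_rel_ghost_unique (qes qes' : edge_fam H B) :
  leavitt_rel qv qe qes -> leavitt_rel qv qe qes' ->
  forall h i j, qes h i j = qes' h i j.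
Proof.
move=> rel rel' h i; apply: (leavitt_rel_sigma_bijective rel h).1 => [j|j|l].
- by exists (qes h i j); rewrite ((rel.2 h).1 i j).2.2.1.
- by exists (qes' h i j); rewrite ((rel'.2 h).1 i j).2.2.1.
- by rewrite (rel.2 h).2.1 (rel'.2 h).2.1.
Qed.

Hypotheses (qpath : path_rel qv qe) (qbij : sigma_bijective).

Lemma ghost_column_exists h (k : 'I_(hI h)) :
  exists b : 'I_(hJ h) -> B,
    (forall j, in_rideal (qv (hr j)) (b j)) /\
    (forall i, \sum_(j < hJ h) nmul B (qe h i j) (b j)
               = if i == k then qv (hs i) else 0).
Proof. by apply: (qbij h).2 => i; apply: in_rideal_delta; exact: qpath.1.1. Qed.

Definition ghost_edges : edge_fam H B :=
  fun h k =>
    proj1_sig (constructive_indefinite_description _ (ghost_column_exists k)).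

Lemma ghost_edgesP h (k : 'I_(hI h)) :
  (forall j, in_rideal (qv (hr j)) (ghost_edges k j)) /\
  (forall i, \sum_(j < hJ h) nmul B (qe h i j) (ghost_edges k j)
             = if i == k then qv (hs i) else 0).
Proof.
exact: proj2_sig (constructive_indefinite_description _ (ghost_column_exists k)).
Qed.

Lemma leavitt_rel_ghost_edges : leavitt_rel qv qe ghost_edges.
Proof.
have [[idem _] edge] := qpath.
have ghost_rideal h (i : 'I_(hI h)) j :
    nmul B (qv (hr j)) (ghost_edges i j) = ghost_edges i j.
  by apply/in_ridealP; [exact: idem | exact: (ghost_edgesP i).1].
split=> [|h]; first exact: qpath.1.
have inj := (qbij h).1.
split; [move=> i j | split=> [i k | j k]].
- split; first exact: (edge h i j).1.
  split; first exact: (edge h i j).2.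
  split; first exact: ghost_rideal.
  apply: (inj (fun j => nmul B (ghost_edges i j) (qv (hs i)))) => [j'|j'|l] /=.
  + by exists (nmul B (ghost_edges i j') (qv (hs i))); rewrite nmulA ghost_rideal.
  + exact: (ghost_edgesP i).1.
  under eq_bigr => j' _ do rewrite nmulA.
  rewrite -nmul_suml (ghost_edgesP i).2.
  by case: eqP => [->|_]; rewrite ?idem ?nmul0l.
- exact: (ghost_edgesP k).2.
- apply: (inj (fun j => \sum_(i < hI h) nmul B (ghost_edges i j) (qe h i k))
              (fun j => if j == k then qv (hr j) else 0)) => [j'|j'|l] /=.
  + apply/in_ridealP; first exact: idem.
    by rewrite nmul_sumr; apply: eq_bigr => i _; rewrite nmulA ghost_rideal.
  + exact/in_rideal_delta/idem.
  rewrite big_nmul_deltar big_nmulA.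
  under eq_bigr => i _ do rewrite (ghost_edgesP i).2.
  by rewrite big_nmul_deltal (edge h l k).1 (edge h l k).2.
Qed.

End LeavittFamilies.

Lemma leavitt_rel_eq (K : fieldType) (H : rhypergraph) (B : nalg K)
    (qv qv' : hvert H -> B) (qe qe' qes : edge_fam H B) :
  (forall v, qv v = qv' v) -> (forall h i j, qe h i j = qe' h i j) ->
  leavitt_rel qv qe qes -> leavitt_rel qv' qe' qes.
Proof.
move=> Ev Ee; rewrite (functional_extensionality _ _ Ev).
suff -> : qe = qe' by [].
by do 3!apply: functional_extensionality_dep => ?; exact: Ee.
Qed.

Section HomImage.
Variables (K : fieldType) (H : rhypergraph) (A B : nalg K) (g : A -> B).
Hypothesis hg : nalg_hom g.

Lemma vert_rel_hom (pv : hvert H -> A) :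
  vert_rel pv -> vert_rel (fun v => g (pv v)).
Proof.
case=> idem orth; split=> [u|u v nuv]; rewrite -hg.2 ?idem //.
by rewrite orth // nalg_hom0.
Qed.

Lemma path_rel_hom (pv : hvert H -> A) (pe : edge_fam H A) :
  path_rel pv pe -> path_rel (fun v => g (pv v)) (fun h i j => g (pe h i j)).
Proof.
case=> vrel edge; split=> [|h i j]; first exact: vert_rel_hom.
by rewrite -!hg.2 (edge h i j).1 (edge h i j).2.
Qed.

Lemma leavitt_rel_hom (lv : hvert H -> A) (le les : edge_fam H A) :
  leavitt_rel lv le les ->
  leavitt_rel (fun v => g (lv v)) (fun h i j => g (le h i j))
              (fun h i j => g (les h i j)).
Proof.
case=> vrel rel; split=> [|h]; first exact: vert_rel_hom.
have [edge [ghost_edge edge_ghost]] := rel h.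
split; [move=> i j | split=> [i k | j k]].
- by have [e1 [e2 [e3 e4]]] := edge i j; rewrite -!hg.2 e1 e2 e3 e4.
- under eq_bigr do rewrite -hg.2.
  by rewrite -(nalg_hom_sum hg) ghost_edge nalg_hom_delta.
- under eq_bigr do rewrite -hg.2.
  by rewrite -(nalg_hom_sum hg) edge_ghost nalg_hom_delta.
Qed.

End HomImage.

Lemma nalg_hom_ghost_edges (K : fieldType) (H : rhypergraph) (L B : nalg K)
    (k : L -> B) (lv : hvert H -> L) (le les : edge_fam H L)
    (qv : hvert H -> B) (qe qes : edge_fam H B) :
  nalg_hom k -> leavitt_rel lv le les -> leavitt_rel qv qe qes ->
  (forall v, k (lv v) = qv v) -> (forall h i j, k (le h i j) = qe h i j) ->
  forall h i j, k (les h i j) = qes h i j.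
Proof.
move=> hk Lrel Brel kv ke.
apply: (leavitt_rel_ghost_unique (qes := fun h i j => k (les h i j))) Brel.
exact: leavitt_rel_eq kv ke (leavitt_rel_hom hk Lrel).
Qed.

Theorem mainTheorem15 (K : fieldType) (H : rhypergraph)
    (A : nalg K) (pv : hvert H -> A) (pe : edge_fam H A)
    (L : nalg K) (lv : hvert H -> L) (le les : edge_fam H L)
    (phi : A -> L) :
  is_path_algebra pv pe ->
  is_leavitt_algebra lv le les ->
  nalg_hom phi ->
  (forall v, phi (pv v) = lv v) ->
  (forall h i j, phi (pe h i j) = le h i j) ->
  is_univ_loc pv pe phi.
Proof.
move=> [Prel path_univ] [Lrel leavitt_univ] hphi phi_v phi_e.
split=> //; split=> [|B g hg g_inv].
  have phi_rel := leavitt_rel_eq (fun v => esym (phi_v v))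
                   (fun h i j => esym (phi_e h i j)) Lrel.
  exact: leavitt_rel_sigma_bijective phi_rel.
have grel := path_rel_hom hg Prel.
have qrel := leavitt_rel_ghost_edges grel g_inv.
have [[k [hk [k_v [k_e _]]]] k_unique] := leavitt_univ B _ _ _ qrel.
have k_phi x : k (phi x) = g x.
  apply: ((path_univ B _ _ grel).2 (fun x => k (phi x)) g) => // [|v|h i j].
  - exact: nalg_hom_comp.
  - by rewrite phi_v k_v.
  - by rewrite phi_e k_e.
split=> [|k1 k2 hk1 hk2 k1_phi k2_phi]; first by exists k.
have k_ghost k' : nalg_hom k' -> (forall x, k' (phi x) = g x) ->
    forall h i j, k' (les h i j) = ghost_edges grel g_inv i j.
  move=> hk' k'_phi; apply: nalg_hom_ghost_edges hk' Lrel qrel _ _ => [v|h i j].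
    by rewrite -phi_v k'_phi.
  by rewrite -phi_e k'_phi.
apply: k_unique => // [v|h i j|h i j].
- by rewrite -phi_v k1_phi k2_phi.
- by rewrite -phi_e k1_phi k2_phi.
- by rewrite (k_ghost k1) ?(k_ghost k2).
Qed.
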